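(* Let $D$ be an integral domain which is a P$\star$MD for some semistar operation $\star$ on $D$. Then: (a) every overring $T$ of $D$ is a P$\dot\star^T$MD; (b) every overring of $D$ that is $t$-linked to $(D,\star)$ is a P$v$MD; in particular $D^{[\star]}$ is a P$v$MD and, if moreover $(D:_KD^\star)\ne(0)$, the complete integral closure $\widetilde D$ of $D$ is a P$v$MD.
   Context: Let $D$ be an integral domain with quotient field $K$. $\overline{\mathbf F}(D)$ denotes the set of all nonzero $D$-submodules of $K$ and $\mathbf f(D)$ the set of nonzero finitely generated $D$-submodules of $K$. A semistar operation on $D$ is a map $\star:\overline{\mathbf F}(D)\to\overline{\mathbf F}(D)$, $E\mapsto E^\star$, such that for all $0\ne x\in K$ and $E,F\in\overline{\mathbf F}(D)$: (1) $(xE)^\star=xE^\star$; (2) $E\subseteq F\Rightarrow E^\star\subseteq F^\star$; (3) $E\subseteq E^\star$ and $(E^\star)^\star=E^\star$. $\star_f$ is defined by $E^{\star_f}=\bigcup\{F^\star:F\in\mathbf f(D),F\subseteq E\}$. An overring of $D$ is a ring $T$ with $D\subseteq T\subseteq K$; semistar operations on $T$ are defined analogously. For an overring $T$, $\dot\star^T$ is the semistar operation on $T$ given by $E\mapsto E^\star$; $v_T$ is $E\mapsto(T:_K(T:_KE))$ and $t_T:=(v_T)_f$. $T$ is $(\star,\star')$-linked to $D$ if for every nonzero finitely generated ideal $F\subseteq D$ with $F^\star=D^\star$ one has $(FT)^{\star'}=T^{\star'}$; $T$ is $t$-linked to $(D,\star)$ if it is $(\star,t_T)$-linked to $D$. For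 a semistar operation $\ast$ on a domain $R$ (here $R=D$ or an overring), $R$ is a P$\ast$MD if every nonzero finitely generated $R$-submodule $F$ of $K$ satisfies $(F(R:_KF))^{\ast_f}=R^\ast$; a P$v$MD is a P$v_R$MD. $D^{[\star]}:=\bigcup\{(H^\star:_KH^\star):H\in\mathbf f(D)\}$. The complete integral closure of $D$ is $\widetilde D=\bigcup\{(E:_KE): E$ a nonzero fractional ideal of $D\}$. *)

(* K is an abstract field (the quotient field of D);
   subsets of K (subrings, D-submodules) are predicates K -> Prop. *)
From HB Require Import structures.
From mathcomp Require Import all_boot all_algebra.
Set Implicit Arguments. Unset Strict Implicit. Unset Printing Implicit Defensive.
Import GRing.Theory.
Local Open Scope ring_scope.

Section Defs.
Variable K : fieldType.

Definition subsetK (A B : K -> Prop) : Prop := forall x, A x -> B x.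

Definition is_subring (R : K -> Prop) : Prop :=
  R 1 /\ (forall x y, R x -> R y -> R (x - y)) /\
  (forall x y, R x -> R y -> R (x * y)).

Definition domain_with_qf (D : K -> Prop) : Prop :=
  is_subring D /\ forall z : K, exists a b, D a /\ D b /\ b != 0 /\ z = a / b.

Definition is_overring (D T : K -> Prop) : Prop := is_subring T /\ subsetK D T.

Definition nz_submod (R E : K -> Prop) : Prop :=
  E 0 /\ (forall x y, E x -> E y -> E (x + y)) /\
  (forall r x, R r -> E x -> E (r * x)) /\ (exists x, x != 0 /\ E x).

Fixpoint span (R : K -> Prop) (s : seq K) : K -> Prop :=
  match s with
  | [::] => fun x => x = 0
  | a :: s' => fun x => exists r y, R r /\ span R s' y /\ x = r * a + y
  end.

Definition fg_submod (R E : K -> Prop) : Prop :=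
  (exists s : seq K, E = span R s) /\ (exists x, x != 0 /\ E x).

Definition scaleK (x : K) (E : K -> Prop) : K -> Prop :=
  fun y => exists e, E e /\ y = x * e.

Definition semistar (R : K -> Prop) (st : (K -> Prop) -> (K -> Prop)) : Prop :=
  (forall E, nz_submod R E -> nz_submod R (st E)) /\
  (forall x E, x != 0 -> nz_submod R E -> st (scaleK x E) = scaleK x (st E)) /\
  (forall E F, nz_submod R E -> nz_submod R F -> subsetK E F ->
     subsetK (st E) (st F)) /\
  (forall E, nz_submod R E -> subsetK E (st E) /\ st (st E) = st E).

Definition star_f (R : K -> Prop) (st : (K -> Prop) -> (K -> Prop))
  (E : K -> Prop) : K -> Prop :=
  fun x => exists F, fg_submod R F /\ subsetK F E /\ st F x.

Definition colon (A B : K -> Prop) : K -> Prop :=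
  fun x => forall b, B b -> A (x * b).

Definition prodK (A B : K -> Prop) : K -> Prop :=
  fun x => exists s : seq (K * K),
    (forall p, p \in s -> A p.1 /\ B p.2) /\ x = \sum_(p <- s) p.1 * p.2.

Definition vop (T : K -> Prop) (E : K -> Prop) : K -> Prop :=
  colon T (colon T E).
Definition top (T : K -> Prop) : (K -> Prop) -> (K -> Prop) :=
  star_f T (vop T).

Definition PstarMD (R : K -> Prop) (ast : (K -> Prop) -> (K -> Prop)) : Prop :=
  forall F, fg_submod R F -> star_f R ast (prodK F (colon R F)) = ast R.

Definition PvMD (R : K -> Prop) : Prop := PstarMD R (vop R).

Definition linked (D T : K -> Prop) (st st' : (K -> Prop) -> (K -> Prop)) : Prop :=
  forall F, fg_submod D F -> subsetK F D -> st F = st D ->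
    st' (prodK F T) = st' T.

Definition t_linked (D : K -> Prop) (st : (K -> Prop) -> (K -> Prop))
  (T : K -> Prop) : Prop := linked D T st (top T).

Definition Dbrack (D : K -> Prop) (st : (K -> Prop) -> (K -> Prop)) : K -> Prop :=
  fun x => exists H, fg_submod D H /\ colon (st H) (st H) x.

Definition frac_ideal (D E : K -> Prop) : Prop :=
  nz_submod D E /\ exists d, d != 0 /\ D d /\ subsetK (scaleK d E) D.

Definition cic (D : K -> Prop) : K -> Prop :=
  fun x => exists E, frac_ideal D E /\ colon E E x.

End Defs.

(* In a P⋆MD every finitely generated [F] satisfies [(F (D : F))^{⋆_f} = D^⋆], so [1] lies
   in [H^⋆] for some finitely generated ideal [H] inside [F (D : F)], i.e. [H^⋆ = D^⋆].  For
   an overring [T] one has [HT] inside [FT (T : FT)]: this puts [1] in [(FT (T : FT))^⋆],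
   giving (a), and when [T] is t-linked it gives [(HT)^t = T], hence (b).  Moreover
   [D^[⋆] = D^⋆], and [D^⋆] is t-linked to [(D, ⋆)]; so is the complete integral closure
   when [(D : D^⋆) <> 0], because finitely many of its elements stabilise one fractional
   ideal [E], and [E^⋆] is still fractional. *)

From mathcomp Require Import all_boot all_algebra.
From Stdlib Require Import FunctionalExtensionality PropExtensionality.
Set Implicit Arguments. Unset Strict Implicit. Unset Printing Implicit Defensive.
Import GRing.Theory.
Local Open Scope ring_scope.

Section Submodules.
Variable K : fieldType.
Implicit Types (R T E F A B : K -> Prop) (s : seq K).

Lemma subsetK_antisym A B : subsetK A B -> subsetK B A -> A = B.
Proof.
move=> AB BA; apply: functional_extensionality => x.
by apply: propositional_extensionality; split; [apply: AB | apply: BA].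
Qed.

(* Unlike [nz_submod], possibly zero. *)
Record submod R E : Prop := Submod {
  submod0 : E 0;
  submodD : forall x y, E x -> E y -> E (x + y);
  submodM : forall r x, R r -> E x -> E (r * x) }.

Section Subring.
Variable R : K -> Prop.
Hypothesis subR : is_subring R.

Lemma subring1 : R 1. Proof. by case: subR. Qed.

Lemma subringB x y : R x -> R y -> R (x - y).
Proof. by case: subR => _ [B _]; apply: B. Qed.

Lemma subringM x y : R x -> R y -> R (x * y).
Proof. by case: subR => _ [_ M]; apply: M. Qed.

Lemma subring0 : R 0.
Proof. by rewrite -(subrr 1); apply: subringB; apply: subring1. Qed.

Lemma subringN x : R x -> R (- x).
Proof. by rewrite -sub0r; apply: subringB; apply: subring0. Qed.

Lemma subringD x y : R x -> R y -> R (x + y).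
Proof. by move=> Rx Ry; rewrite -(opprK y); apply: subringB => //; apply: subringN. Qed.

Lemma ring_submod : submod R R.
Proof. by split; [exact: subring0 | exact: subringD | exact: subringM]. Qed.

Lemma ring_nz_submod : nz_submod R R.
Proof.
have [E0 ED EM] := ring_submod.
by do !split=> //; exists 1; split; [exact: oner_neq0 | exact: subring1].
Qed.

Lemma submodN E x : submod R E -> E x -> E (- x).
Proof.
move=> modE Ex; rewrite -mulN1r; apply: (submodM modE) => //.
by apply: subringN; apply: subring1.
Qed.

Lemma submodB E x y : submod R E -> E x -> E y -> E (x - y).
Proof. by move=> modE Ex Ey; apply: (submodD modE) => //; apply: submodN. Qed.

End Subring.

Lemma nz_submodW R E : nz_submod R E -> submod R E.
Proof. by case=> E0 [ED [EM _]]; split. Qed.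

Lemma submod_nz R E x : submod R E -> x != 0 -> E x -> nz_submod R E.
Proof. by case=> E0 ED EM x0 Ex; do !split=> //; exists x. Qed.

Lemma scaleK_nz_submod R E x : x != 0 -> nz_submod R E -> nz_submod R (scaleK x E).
Proof.
move=> x0 [E0 [ED [EM [e [e0 Ee]]]]]; split; first by exists 0; rewrite mulr0.
split.
  by move=> _ _ [a [Ea ->]] [b [Eb ->]]; exists (a + b); rewrite mulrDr; split=> //; apply: ED.
split.
  by move=> r _ Rr [a [Ea ->]]; exists (r * a); rewrite mulrCA; split=> //; apply: EM.
by exists (x * e); split; [rewrite mulf_neq0 | exists e].
Qed.

Lemma submod_restrict R R' E : subsetK R' R -> submod R E -> submod R' E.
Proof. by move=> R'R [E0 ED EM]; split=> // r x /R'R; apply: EM. Qed.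

Lemma nz_submod_restrict R R' E : subsetK R' R -> nz_submod R E -> nz_submod R' E.
Proof.
by move=> R'R [E0 [ED [EM nzE]]]; do 3!split=> //; move=> r x /R'R; apply: EM.
Qed.

Lemma submod_mull R E x : submod R E -> submod R (fun y => E (x * y)).
Proof.
case=> E0 ED EM; split; first by rewrite mulr0.
  by move=> y z Ey Ez; rewrite mulrDr; apply: ED.
by move=> r y Rr Ey; rewrite mulrCA; apply: EM.
Qed.

Lemma colon_submod R E F : submod R E -> submod R (colon E F).
Proof.
case=> E0 ED EM; split.
- by move=> b _; rewrite mul0r.
- by move=> x y Ex Ey b Fb; rewrite mulrDl; apply: ED; [apply: Ex | apply: Ey].
- by move=> r x Rr Ex b Fb; rewrite -mulrA; apply: EM => //; apply: Ex.
Qed.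

Lemma span_submod R s : is_subring R -> submod R (span R s).
Proof.
move=> subR; elim: s => [|a s [S0 SD SM]] /=.
  by split=> [|x y -> ->|r x _ ->]; rewrite ?addr0 ?mulr0.
split.
- by exists 0, 0; rewrite mul0r addr0; split; [exact: subring0 | split].
- move=> _ _ [r [y [Rr [Sy ->]]]] [r' [y' [Rr' [Sy' ->]]]].
  exists (r + r'), (y + y'); split; first exact: subringD.
  by split; [exact: SD | rewrite mulrDl addrACA].
- move=> r _ Rr [r' [y [Rr' [Sy ->]]]].
  exists (r * r'), (r * y); split; first exact: subringM.
  by split; [exact: SM | rewrite mulrDr mulrA].
Qed.

Lemma mem_span R s a : is_subring R -> a \in s -> span R s a.
Proof.
move=> subR; elim: s => [|b s IHs] //=; rewrite in_cons => /orP[/eqP-> | sa].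
  exists 1, 0; rewrite mul1r addr0; split; first exact: subring1.
  by split=> //; apply: submod0 (span_submod s subR).
by exists 0, a; rewrite mul0r add0r; split; [exact: subring0 | split; [exact: IHs|]].
Qed.

Lemma span_min R E s :
  submod R E -> (forall a, a \in s -> E a) -> subsetK (span R s) E.
Proof.
case=> E0 ED EM; elim: s => [|b s IHs] sE x /=; first by move->.
move=> [r [y [Rr [Sy ->]]]]; apply: ED; first by apply/EM/sE/mem_head.
by apply: IHs Sy => a sa; apply: sE; rewrite in_cons sa orbT.
Qed.

Lemma span_mono R R' s :
  is_subring R' -> subsetK R R' -> subsetK (span R s) (span R' s).
Proof.
move=> subR' RR'; apply: span_min; last by move=> a; apply: mem_span.
exact: submod_restrict RR' (span_submod s subR').
Qed.

Lemma span_nz R s x : span R s x -> x != 0 -> exists2 a, a \in s & a != 0.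
Proof.
elim: s x => [|b s IHs] x /=; first by move=> ->; rewrite eqxx.
move=> [r [y [_ [Sy ->]]]] x0; have [b0 | nz_b] := eqVneq b 0; last first.
  by exists b; rewrite ?mem_head.
have [|a sa nz_a] := IHs y Sy; first by rewrite b0 mulr0 add0r in x0.
by exists a; rewrite // in_cons sa orbT.
Qed.

Lemma span_one R : is_subring R -> span R [:: 1] = R.
Proof.
move=> subR; apply: subsetK_antisym.
  apply: (span_min (ring_submod subR)) => a; rewrite inE => /eqP->.
  exact: subring1.
by move=> r Rr; exists r, 0; rewrite mulr1 addr0.
Qed.

Lemma fg_submod_ring R : is_subring R -> fg_submod R R.
Proof.
move=> subR; split; first by exists [:: 1]; rewrite span_one.
by exists 1; split; [exact: oner_neq0 | exact: subring1].
Qed.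

Lemma fg_nz_submod R F : is_subring R -> fg_submod R F -> nz_submod R F.
Proof. by move=> subR [[s ->] [x [x0 Sx]]]; apply: (submod_nz (span_submod s subR) x0 Sx). Qed.

Lemma colon_span R T s x :
  submod R T -> (forall a, a \in s -> T (x * a)) -> colon T (span R s) x.
Proof. by move=> modT; apply: span_min (submod_mull x modT). Qed.

Lemma prodK_ind A B P : P 0 -> (forall x y, P x -> P y -> P (x + y)) ->
  (forall a b, A a -> B b -> P (a * b)) -> subsetK (prodK A B) P.
Proof.
move=> P0 PD PM _ [l [lAB ->]].
elim: l lAB => [|p l IHl] lAB; first by rewrite big_nil.
rewrite big_cons; apply: PD; first by have [] := lAB p (mem_head _ _); apply: PM.
by apply: IHl => q lq; apply: lAB; rewrite in_cons lq orbT.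
Qed.

Lemma prodK0 A B : prodK A B 0.
Proof. by exists [::]; rewrite big_nil. Qed.

Lemma prodKD A B x y : prodK A B x -> prodK A B y -> prodK A B (x + y).
Proof.
move=> [l [lAB ->]] [l' [l'AB ->]]; exists (l ++ l'); rewrite big_cat.
by split=> // p; rewrite mem_cat => /orP[]; [apply: lAB | apply: l'AB].
Qed.

Lemma prodK_mul A B a b : A a -> B b -> prodK A B (a * b).
Proof.
by move=> Aa Bb; exists [:: (a, b)]; rewrite big_seq1; split=> // p; rewrite inE => /eqP->.
Qed.

Lemma prodK_min R A B E :
  submod R E -> (forall a b, A a -> B b -> E (a * b)) -> subsetK (prodK A B) E.
Proof. by case=> E0 ED _; apply: prodK_ind. Qed.

Lemma prodK_mull A B x : (forall a b, A a -> B b -> prodK A B (x * (a * b))) ->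
  subsetK (prodK A B) (fun z => prodK A B (x * z)).
Proof.
move=> ABx; apply: prodK_ind => //; first by rewrite mulr0; apply: prodK0.
by move=> y z xy xz; rewrite mulrDr; apply: prodKD.
Qed.

Lemma prodK_submod R A B : submod R B -> submod R (prodK A B).
Proof.
move=> modB; split; [exact: prodK0 | exact: prodKD |].
move=> r x Rr; apply: prodK_mull => a b Aa Bb.
by rewrite mulrCA; apply: prodK_mul => //; apply: (submodM modB).
Qed.

Lemma prodK_nz_submod R E F :
  nz_submod R E -> nz_submod R F -> nz_submod R (prodK E F).
Proof.
move=> [_ [_ [_ [e [e0 Ee]]]]] nzF; have [_ [_ [_ [f [f0 Ff]]]]] := nzF.
exact: (submod_nz (prodK_submod _ (nz_submodW nzF)) (mulf_neq0 e0 f0) (prodK_mul Ee Ff)).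
Qed.

Lemma prodK_mono A B A' B' :
  subsetK A A' -> subsetK B B' -> subsetK (prodK A B) (prodK A' B').
Proof.
move=> AA' BB'; apply: prodK_ind; [exact: prodK0 | exact: prodKD |].
by move=> a b /AA' A'a /BB' B'b; apply: prodK_mul.
Qed.

Lemma prodK_colon_sub T F : is_subring T -> subsetK (prodK F (colon T F)) T.
Proof.
move=> subT; apply: prodK_min (ring_submod subT) _.
by move=> a b Fa Tb; rewrite mulrC; apply: Tb.
Qed.

End Submodules.

Section Semistar.
Variables (K : fieldType) (D : K -> Prop) (st : (K -> Prop) -> (K -> Prop)).
Hypotheses (subD : is_subring D) (semi_st : semistar D st).
Implicit Types (E F A : K -> Prop).

Lemma st_nz E : nz_submod D E -> nz_submod D (st E).
Proof. by case: semi_st => nz_st _; apply: nz_st. Qed.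

Lemma st_ext E : nz_submod D E -> subsetK E (st E).
Proof. by case: semi_st => _ [_ [_ st_cl]] nzE; case: (st_cl E nzE). Qed.

Lemma st_idem E : nz_submod D E -> st (st E) = st E.
Proof. by case: semi_st => _ [_ [_ st_cl]] nzE; case: (st_cl E nzE). Qed.

Lemma st_mono E F :
  nz_submod D E -> nz_submod D F -> subsetK E F -> subsetK (st E) (st F).
Proof. by case: semi_st => _ [_ [mono _]]; apply: mono. Qed.

Lemma st_scale_sub E A b : nz_submod D E -> nz_submod D A ->
  (forall e, E e -> A (b * e)) -> forall y, st E y -> st A (b * y).
Proof.
move=> nzE nzA bEA y Ey; have [->|b0] := eqVneq b 0.
  by rewrite mul0r; case: (st_nz nzA).
have st_bE : st (scaleK b E) (b * y).
  by case: semi_st => _ [st_scale _]; rewrite st_scale //; exists y.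
apply: st_mono (scaleK_nz_submod b0 nzE) nzA _ _ st_bE.
by move=> _ [e [Ee ->]]; apply: bEA.
Qed.

Lemma st_mem_of_unit F A x : nz_submod D F -> nz_submod D A -> st F 1 ->
  (forall f, F f -> st A (x * f)) -> st A x.
Proof.
move=> nzF nzA F1 xFA; rewrite -(mulr1 x) -(st_idem nzA).
exact: st_scale_sub nzF (st_nz nzA) xFA _ F1.
Qed.

Lemma st_sub_of_unit E A : nz_submod D E -> nz_submod D A ->
  (forall a e, A a -> E e -> E (a * e)) -> st E 1 -> subsetK (st A) (st E).
Proof.
move=> nzE nzA AE E1; rewrite -(st_idem nzE); apply: st_mono nzA (st_nz nzE) _.
move=> a Aa; apply: (st_mem_of_unit nzE nzE E1) => e Ee.
by apply: st_ext => //; apply: AE.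
Qed.

Lemma st_prodK_of_unit F E : nz_submod D F -> nz_submod D E -> st F 1 ->
  subsetK (st E) (st (prodK F E)).
Proof.
move=> nzF nzE F1; have nzFE := prodK_nz_submod nzF nzE.
rewrite -(st_idem nzFE); apply: (st_mono nzE (st_nz nzFE)) => e Ee.
apply: (st_mem_of_unit nzF nzFE F1) => f Ff.
by apply: st_ext => //; rewrite mulrC; apply: prodK_mul.
Qed.

Lemma st_eq_of_unit E : nz_submod D E -> subsetK E D -> st E 1 -> st E = st D.
Proof.
move=> nzE ED E1; have nzD := ring_nz_submod subD.
apply: subsetK_antisym; first exact: (st_mono nzE nzD ED).
by apply: (st_sub_of_unit nzE nzD _ E1) => a e Da Ee; apply: (submodM (nz_submodW nzE)).
Qed.

Lemma st_ring_overring : is_overring D (st D).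
Proof.
have nzD := ring_nz_submod subD; have mod_stD := nz_submodW (st_nz nzD).
have stD1 : st D 1 by apply: st_ext nzD _ (subring1 subD).
split=> //; last exact: st_ext nzD.
split=> //; split=> x y stDx stDy; first exact: (submodB subD mod_stD stDx stDy).
rewrite -(st_idem nzD); apply: st_scale_sub nzD (st_nz nzD) _ _ stDy => e De.
by rewrite mulrC; apply: (submodM mod_stD).
Qed.

End Semistar.

Section TLinked.
Variable K : fieldType.
Implicit Types (D T E H : K -> Prop) (st : (K -> Prop) -> (K -> Prop)).

Lemma vop_ring T : is_subring T -> vop T T = T.
Proof.
move=> subT; apply: subsetK_antisym => x Tx.
  by rewrite -(mulr1 x); apply: Tx => b Tb; rewrite mul1r.
move=> b Tb; apply: (subringM subT Tx).
by rewrite -(mulr1 b); apply: Tb; apply: subring1.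
Qed.

Lemma top_eq_ring T E H : is_subring T -> fg_submod T H ->
  subsetK H E -> subsetK E T -> vop T H 1 -> top T E = T.
Proof.
move=> subT fgH HE ET H1; apply: subsetK_antisym.
  move=> x [H' [_ [H'E H'x]]]; rewrite -(mulr1 x); apply: H'x => b H'b.
  by rewrite mul1r; apply/ET/H'E.
move=> t Tt; exists H; split=> //; split=> // b Hb.
by apply: subringM => //; rewrite -[b]mul1r; apply: H1.
Qed.

Lemma top_ring T : is_subring T -> top T T = T.
Proof.
move=> subT; apply: top_eq_ring (fg_submod_ring subT) _ _ _ => //.
by rewrite vop_ring //; apply: subring1.
Qed.

Lemma t_linked_intro D st T : is_subring D -> is_overring D T ->
  (forall F, fg_submod D F -> subsetK F D -> st F = st D -> subsetK (colon T F) T) ->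
  t_linked D st T.
Proof.
move=> subD [subT DT] colonT F fgF FD stF; have [[s defF] [z [z0 Fz]]] := fgF.
have FsT : subsetK F (span T s) by rewrite defF; apply: span_mono.
rewrite top_ring //; apply: (top_eq_ring (H := span T s)) => //.
- by split; [exists s | exists z; split=> //; apply: FsT].
- apply: (span_min (prodK_submod F (ring_submod subT))).
  move=> a sa; rewrite -[a]mulr1; apply: prodK_mul; last exact: (subring1 subT).
  by rewrite defF; apply: mem_span.
- apply: (prodK_min (ring_submod subT)) => a b Fa Tb.
  by apply: subringM => //; apply/DT/FD.
- move=> b bsT; rewrite mul1r; apply: (colonT F) => // f /FsT; apply: bsT.
Qed.

Lemma st_ring_t_linked D st : is_subring D -> semistar D st -> t_linked D st (st D).
Proof.
move=> subD semi_st; have nzD := ring_nz_submod subD.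
apply: (t_linked_intro subD (st_ring_overring subD semi_st)) => F fgF _ stF b bF.
apply: (st_mem_of_unit semi_st (fg_nz_submod subD fgF) nzD) bF.
by rewrite stF; apply: (st_ext semi_st nzD); apply: subring1.
Qed.

End TLinked.

Section PstarMD.
Variables (K : fieldType) (D : K -> Prop) (st : (K -> Prop) -> (K -> Prop)).
Hypotheses (subD : is_subring D) (semi_st : semistar D st).
Hypothesis PstarMD_D : PstarMD D st.
Implicit Types (T : K -> Prop) (s : seq K).

(* [span D h] is a finitely generated witness for [1 ∈ (F (D : F))^{⋆_f} = D^⋆],
   where [F = span D s]. *)
Lemma PstarMD_unit_in_prod_colon T s x : is_overring D T -> span T s x -> x != 0 ->
  exists h, [/\ fg_submod D (span D h), subsetK (span D h) D,
    subsetK (span T h) (prodK (span T s) (colon T (span T s))) & st (span D h) 1].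
Proof.
move=> [subT DT] Sx x0; have [a sa a0] := span_nz Sx x0.
have fgF : fg_submod D (span D s).
  by split; [exists s | exists a; split=> //; apply: mem_span].
have [_ [[[h ->] nzH] [HFF H1]]] : star_f D st (prodK (span D s) (colon D (span D s))) 1.
  by rewrite (PstarMD_D fgF); apply: (st_ext semi_st (ring_nz_submod subD)); apply: subring1.
exists h; split=> //; first by split; [exists h |].
  by move=> y /HFF; apply: prodK_colon_sub.
apply: (span_min (prodK_submod _ (colon_submod _ (ring_submod subT)))) => c hc.
apply: (prodK_mono _ _ (HFF c (mem_span subD hc))); first exact: span_mono.
move=> y Fy; apply: (colon_span (ring_submod subT)) => b sb.
by apply/DT/Fy; apply: mem_span.
Qed.

Lemma PstarMD_overring T : is_overring D T -> PstarMD T st.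
Proof.
move=> overT F [[s ->] [x [x0 Sx]]]; have [subT DT] := overT.
have nzT := nz_submod_restrict DT (ring_nz_submod subT).
apply: subsetK_antisym => [y [H [fgH [HP Hy]]] | y Ty].
  apply: (st_mono semi_st _ nzT _ Hy).
    exact: nz_submod_restrict DT (fg_nz_submod subT fgH).
  by move=> z /HP; apply: prodK_colon_sub.
have [h [[_ [z [z0 Hz]]] _ HP H1]] := PstarMD_unit_in_prod_colon overT Sx x0.
have DhTh : subsetK (span D h) (span T h) by apply: span_mono.
have fgTh : fg_submod T (span T h).
  by split; [exists h | exists z; split=> //; apply: DhTh].
have nzTh := nz_submod_restrict DT (fg_nz_submod subT fgTh).
have Th1 : st (span T h) 1.
  apply: (st_mono semi_st _ nzTh DhTh H1).
  exact: submod_nz (span_submod h subD) z0 Hz.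
exists (span T h); split=> //; split=> //.
apply: (st_sub_of_unit semi_st nzTh nzT _ Th1 Ty) => t e Tt He.
exact: (submodM (span_submod h subT)).
Qed.

Lemma t_linked_PvMD T : is_overring D T -> t_linked D st T -> PvMD T.
Proof.
move=> overT linkT F [[s ->] [x [x0 Sx]]]; have [subT DT] := overT.
have [h [fgH HD HP H1]] := PstarMD_unit_in_prod_colon overT Sx x0.
have stH := st_eq_of_unit subD semi_st (fg_nz_submod subD fgH) HD H1.
have : top T (prodK (span D h) T) 1.
  by rewrite (linkT _ fgH HD stH) top_ring //; apply: subring1.
move=> [H [fgH' [H'HT H'1]]].
change (top T (prodK (span T s) (colon T (span T s))) = vop T T).
rewrite vop_ring //; apply: (top_eq_ring subT fgH' _ (prodK_colon_sub subT) H'1).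
move=> y /H'HT HTy; apply: HP; move: HTy.
apply: (prodK_min (span_submod h subT)) => a b Ha Tb; rewrite mulrC.
by apply: (submodM (span_submod h subT)) => //; apply: span_mono Ha.
Qed.

Lemma Dbrack_PstarMD : Dbrack D st = st D.
Proof.
have nzD := ring_nz_submod subD; have nz_stD := st_nz semi_st nzD.
apply: subsetK_antisym => [x [H [fgH xH]] | x stDx]; last first.
  exists D; split; first exact: fg_submod_ring.
  by move=> y; apply: (subringM (proj1 (st_ring_overring subD semi_st)) stDx).
have nzH := fg_nz_submod subD fgH.
have [H0 [fgH0 [H0P H01]]] : star_f D st (prodK H (colon D H)) 1.
  by rewrite (PstarMD_D fgH); apply: (st_ext semi_st nzD); apply: subring1.
apply: (st_mem_of_unit semi_st (fg_nz_submod subD fgH0) nzD H01) => e /H0P.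
apply: (prodK_min (submod_mull x (nz_submodW nz_stD))) => a c Ha Hc.
rewrite [a * c]mulrC mulrCA; apply: (st_scale_sub semi_st nzH nzD Hc).
by apply: xH; apply: (st_ext semi_st nzH).
Qed.

End PstarMD.

Section CompleteIntegralClosure.
Variables (K : fieldType) (D : K -> Prop).
Hypothesis subD : is_subring D.
Implicit Types (E F : K -> Prop).

Lemma frac_ideal_ring : frac_ideal D D.
Proof.
split; first exact: ring_nz_submod.
exists 1; split; first exact: oner_neq0.
by split; [apply: subring1 | move=> _ [d [Dd ->]]; rewrite mul1r].
Qed.

Lemma frac_ideal_prodK E F :
  frac_ideal D E -> frac_ideal D F -> frac_ideal D (prodK E F).
Proof.
move=> [nzE [d [d0 [Dd dED]]]] [nzF [d' [d'0 [Dd' d'FD]]]].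
split; first exact: prodK_nz_submod.
exists (d * d'); split; first by rewrite mulf_neq0.
split; first exact: (subringM subD).
move=> _ [z [EFz ->]]; move: EFz.
apply: (prodK_min (submod_mull _ (ring_submod subD))) => e f Ee Ff.
by rewrite mulrACA; apply: (subringM subD); [apply: dED; exists e | apply: d'FD; exists f].
Qed.

Lemma colon_selfB E x y :
  submod D E -> colon E E x -> colon E E y -> colon E E (x - y).
Proof.
move=> modE Ex Ey b Eb; rewrite mulrBl.
by apply: (submodB subD modE); [apply: Ex | apply: Ey].
Qed.

Lemma colon_selfM E x y : colon E E x -> colon E E y -> colon E E (x * y).
Proof. by move=> Ex Ey b Eb; rewrite -mulrA; apply/Ex/Ey. Qed.

Lemma colon_self_prodKl E F x : colon E E x -> colon (prodK E F) (prodK E F) x.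
Proof.
move=> Ex; apply: prodK_mull => e f Ee Ff.
by rewrite mulrA; apply: prodK_mul => //; apply: Ex.
Qed.

Lemma colon_self_prodKr E F x : colon F F x -> colon (prodK E F) (prodK E F) x.
Proof.
move=> Fx; apply: prodK_mull => e f Ee Ff.
by rewrite mulrCA; apply: prodK_mul => //; apply: Fx.
Qed.

Lemma cic_overring : is_overring D (cic D).
Proof.
split; last first.
  by move=> d Dd; exists D; split; [exact: frac_ideal_ring | move=> b; apply: subringM].
split; first by exists D; split; [exact: frac_ideal_ring | move=> b; rewrite mul1r].
split=> x y [E [fracE Ex]] [F [fracF Fy]]; have fracEF := frac_ideal_prodK fracE fracF.
  exists (prodK E F); split=> //; apply: colon_selfB (nz_submodW (proj1 fracEF)) _ _.
    exact: colon_self_prodKl.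
  exact: colon_self_prodKr.
exists (prodK E F); split=> //.
by apply: colon_selfM; [apply: colon_self_prodKl | apply: colon_self_prodKr].
Qed.

Lemma cic_common_frac_ideal (l : seq K) : (forall a, a \in l -> cic D a) ->
  exists2 E, frac_ideal D E & forall a, a \in l -> colon E E a.
Proof.
elim: l => [|a l IHl] cic_l; first by exists D; first exact: frac_ideal_ring.
have [|E fracE El] := IHl; first by move=> b lb; apply: cic_l; rewrite in_cons lb orbT.
have [F [fracF Fa]] := cic_l a (mem_head _ _).
exists (prodK E F); first exact: frac_ideal_prodK.
move=> b; rewrite in_cons => /orP[/eqP-> | lb]; first exact: colon_self_prodKr.
by apply: colon_self_prodKl; apply: El.
Qed.

Variable st : (K -> Prop) -> (K -> Prop).
Hypothesis semi_st : semistar D st.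

Lemma st_frac_ideal E :
  (exists c, c != 0 /\ colon D (st D) c) -> frac_ideal D E -> frac_ideal D (st E).
Proof.
move=> [c [c0 cD]] [nzE [d [d0 [Dd dED]]]]; have nzD := ring_nz_submod subD.
split; first exact: st_nz.
have Dc : D c.
  by rewrite -[c]mulr1; apply: cD; apply: (st_ext semi_st nzD); apply: subring1.
exists (c * d); split; first by rewrite mulf_neq0.
split; first exact: (subringM subD).
move=> _ [y [stEy ->]]; rewrite -mulrA; apply: cD.
by apply: (st_scale_sub semi_st nzE nzD _ stEy) => e Ee; apply: dED; exists e.
Qed.

Lemma cic_t_linked : (exists c, c != 0 /\ colon D (st D) c) -> t_linked D st (cic D).
Proof.
move=> cD; have nzD := ring_nz_submod subD.
apply: (t_linked_intro subD cic_overring) => F fgF _ stF b bF.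
have nzF := fg_nz_submod subD fgF; have [[s defF] _] := fgF.
have [E fracE bsE] : exists2 E, frac_ideal D E &
    forall a, a \in [seq b * a | a <- s] -> colon E E a.
  apply: cic_common_frac_ideal => _ /mapP[a sa ->].
  by apply: bF; rewrite defF; apply: mem_span.
have [nzE _] := fracE; have modE := nz_submodW nzE.
have bF_colon : subsetK F (fun f => colon E E (b * f)).
  rewrite defF; apply: (span_min (submod_mull b (colon_submod E modE))) => a sa.
  by apply: bsE; apply: map_f.
have bFE : subsetK (prodK F E) (fun z => E (b * z)).
  apply: (prodK_min (submod_mull b modE)) => f e /bF_colon bf Ee.
  by rewrite mulrA; apply: bf.
have F1 : st F 1 by rewrite stF; apply: (st_ext semi_st nzD); apply: subring1.
exists (st E); split; first exact: st_frac_ideal.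
move=> y /(st_prodK_of_unit semi_st nzF nzE F1).
exact: (st_scale_sub semi_st (prodK_nz_submod nzF nzE) nzE bFE).
Qed.

End CompleteIntegralClosure.

Theorem corollary5p5 (K : fieldType) (D : K -> Prop)
  (st : (K -> Prop) -> (K -> Prop)) :
  domain_with_qf D -> semistar D st -> PstarMD D st ->
  (forall T, is_overring D T -> PstarMD T st) /\
  ((forall T, is_overring D T -> t_linked D st T -> PvMD T) /\
   PvMD (Dbrack D st) /\
   ((exists x, x != 0 /\ colon D (st D) x) -> PvMD (cic D))).
Proof.
move=> [subD _] semi_st PstarMD_D.
have PvMD_of_t_linked := t_linked_PvMD subD semi_st PstarMD_D.
split; first exact: PstarMD_overring.
split; first exact: PvMD_of_t_linked.
split.
  rewrite Dbrack_PstarMD //.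
  exact: PvMD_of_t_linked (st_ring_overring subD semi_st) (st_ring_t_linked subD semi_st).
by move=> cD; apply: PvMD_of_t_linked (cic_overring subD) (cic_t_linked subD semi_st cD).
Qed.
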